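(* Let $X=\{r_0,r_1,i\}$, $R=\{r_0,r_1\}$, $I=\{i\}$, $\mathcal A=\mathcal P(X)$, and define $\Pi_R:X\to R$ by $\Pi_R(r_0)=r_0$, $\Pi_R(r_1)=r_1$, $\Pi_R(i)=r_0$. Let $G=\{(x,x):x\in X\}$. Fix $\eta\in[0,1)$ with $\eta\neq0$. Let $m(i)=0$, $m(r_0)=m(r_1)=\frac1{1-\eta}$, $\mu(B)=\sum_{x\in B}m(x)$ for $B\subseteq X$, and let $\mu^{\otimes2}$ be the finitely additive set function on $\mathcal P(X\times X)$ determined by $\mu^{\otimes2}(A\times B)=\mu(A)\mu(B)$ (equivalently $\mu^{\otimes2}(S)=\sum_{(x,y)\in S}m(x)m(y)$). Then $(X,\mathcal P(X),\mu,\mu^{\otimes2},R,I,\Pi_R,G,E_0,\eta)$ with $E_0=\mu(R)+\mu(I)=\frac{2}{1-\eta}$ is an admissible structural model.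
   Context: For relations, $H\circ K=\{(x,z):\exists y\,(x,y)\in H,(y,z)\in K\}$. An admissible structural model is a tuple $(X,\mathcal A,\mu,\mu^{\otimes2},R,I,\Pi_R,G,E_0,\eta)$ with $X$ nonempty, $\mathcal A$ an algebra on $X$, $\mu:\mathcal A\to[0,\infty)$ finitely additive, $\mu^{\otimes2}$ finitely additive on the product algebra with $\mu^{\otimes2}(B_1\times B_2)=\mu(B_1)\mu(B_2)$, $R,I\in\mathcal A$ disjoint, $\Pi_R:X\to R$, $G$ in the product algebra, $E_0>0$, $\eta\in[0,1]$, satisfying: Axiom I: $\Pi_R\circ\Pi_R=\Pi_R$, $\Pi_R|_R=\mathrm{id}_R$, $\Pi_R^{-1}(B)\in\mathcal A$ for measurable $B\subseteq R$; Axiom II: $G$ reflexive, symmetric, $G\circ G=G$; Axiom III: $\mu(R)+\mu(I)=E_0$, $\mu(\Pi_R^{-1}(B))=\mu(B)$ for measurable $B\subseteq R$, and for all $B\in\mathcal A$, $\mu^{\otimes2}((B\times X)\cap G)=\mu(B)+\eta\,\mu^{\otimes2}((\Pi_R^{-1}(B)\times X)\cap G)$. *)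

From Stdlib Require Import Reals Lra List ClassicalEpsilon.
Open Scope R_scope.

Definition pset (X : Type) := X -> Prop.

Definition seteq {X : Type} (A B : pset X) : Prop := forall x, A x <-> B x.

Definition setU {X} (A B : pset X) : pset X := fun x => A x \/ B x.
Definition setC {X} (A : pset X) : pset X := fun x => ~ A x.
Definition setI {X} (A B : pset X) : pset X := fun x => A x /\ B x.
Definition setT {X} : pset X := fun _ => True.
Definition subset {X} (A B : pset X) : Prop := forall x, A x -> B x.
Definition disjoint {X} (A B : pset X) : Prop := forall x, A x -> B x -> False.
Definition preimage {X Y} (f : X -> Y) (B : pset Y) : pset X := fun x => B (f x).
Definition rect {X} (B1 B2 : pset X) : pset (X * X) :=
  fun p => B1 (fst p) /\ B2 (snd p).

Definition is_algebra {X} (A : pset (pset X)) : Prop :=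
  A setT /\ (forall B, A B -> A (setC B)) /\ (forall B C, A B -> A C -> A (setU B C)).

Definition prod_alg {X} (A : pset (pset X)) : pset (pset (X * X)) :=
  fun S => forall C : pset (pset (X * X)), is_algebra C ->
    (forall B1 B2, A B1 -> A B2 -> C (rect B1 B2)) -> C S.

Definition fin_additive_nonneg {X} (A : pset (pset X)) (mu : pset X -> R) : Prop :=
  (forall B, A B -> 0 <= mu B) /\
  (forall B C, A B -> A C -> disjoint B C -> mu (setU B C) = mu B + mu C).

Definition rel_comp {X} (H K : pset (X * X)) : pset (X * X) :=
  fun p => exists y, H (fst p, y) /\ K (y, snd p).

(* Admissible structural model (X, A, mu, mu2, R, I, PiR, G, E0, eta).
   PiR : X -> R is encoded as a map X -> X with values in Rs. *)
Definition admissible (X : Type) (A : pset (pset X)) (mu : pset X -> R)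
  (mu2 : pset (X * X) -> R) (Rs Is : pset X) (PiR : X -> X) (G : pset (X * X))
  (E0 eta : R) : Prop :=
  inhabited X /\
  is_algebra A /\
  fin_additive_nonneg A mu /\
  fin_additive_nonneg (prod_alg A) mu2 /\
  (forall B1 B2, A B1 -> A B2 -> mu2 (rect B1 B2) = mu B1 * mu B2) /\
  A Rs /\ A Is /\ disjoint Rs Is /\
  (forall x, Rs (PiR x)) /\
  prod_alg A G /\
  0 < E0 /\ 0 <= eta <= 1 /\
  (forall x, PiR (PiR x) = PiR x) /\
  (forall x, Rs x -> PiR x = x) /\
  (forall B, A B -> subset B Rs -> A (preimage PiR B)) /\
  (forall x, G (x, x)) /\
  (forall x y, G (x, y) -> G (y, x)) /\
  seteq (rel_comp G G) G /\
  mu Rs + mu Is = E0 /\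
  (forall B, A B -> subset B Rs -> mu (preimage PiR B) = mu B) /\
  (forall B, A B ->
     mu2 (setI (rect B setT) G) =
     mu B + eta * mu2 (setI (rect (preimage PiR B) setT) G)).

Inductive X3 : Type := r0 | r1 | ii.

Definition R3 : pset X3 := fun x => x = r0 \/ x = r1.
Definition I3 : pset X3 := fun x => x = ii.
Definition PowX3 : pset (pset X3) := fun _ => True.

Definition Pi3 (x : X3) : X3 :=
  match x with r0 => r0 | r1 => r1 | ii => r0 end.

Definition G3 : pset (X3 * X3) := fun p => fst p = snd p.

Definition m3 (eta : R) (x : X3) : R :=
  match x with ii => 0 | _ => 1 / (1 - eta) end.

Definition ind {T} (P : pset T) (t : T) : R :=
  if excluded_middle_informative (P t) then 1 else 0.

Definition all3 : list X3 := r0 :: r1 :: ii :: nil.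

Definition mu3 (eta : R) (B : pset X3) : R :=
  fold_right Rplus 0 (map (fun x => ind B x * m3 eta x) all3).

Definition mu3x2 (eta : R) (S : pset (X3 * X3)) : R :=
  fold_right Rplus 0
    (map (fun x => fold_right Rplus 0
            (map (fun y => ind S (x, y) * (m3 eta x * m3 eta y)) all3)) all3).

(* The set functions are weighted counting measures, so every axiom reduces to
   a pointwise identity on the three points.  The only substantial one is
   Axiom III: since G is the diagonal, mu2((B x X) n G) is the sum of m(x)^2
   over B; the weight c = 1/(1 - eta) solves c^2 = c + eta c^2; and i carries
   weight 0, so pulling B back along Pi_R does not change any weighted sum. *)
From Pilot Require Import Defs.
From Stdlib Require Import Reals.
From Stdlib Require Import Lra List ClassicalEpsilon FunctionalExtensionality PropExtensionality.
Open Scope R_scope.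
(* [Reals] also exports an [ind] (from Rtopology); restore the indicator of [Defs]. *)
Import Defs.

Definition sumR {T} (s : list T) (f : T -> R) : R := fold_right Rplus 0 (map f s).

Lemma sumR_ext {T} (s : list T) (f g : T -> R) :
  (forall x, f x = g x) -> sumR s f = sumR s g.
Proof. intro E; unfold sumR; induction s as [|x s IH]; simpl; [reflexivity|]; now rewrite E, IH. Qed.

Lemma sumR_plus {T} (s : list T) (f g : T -> R) :
  sumR s (fun x => f x + g x) = sumR s f + sumR s g.
Proof. unfold sumR; induction s as [|x s IH]; simpl; [ring|]; rewrite IH; ring. Qed.

Lemma sumR_scal_l {T} (s : list T) (c : R) (f : T -> R) :
  sumR s (fun x => c * f x) = c * sumR s f.
Proof. unfold sumR; induction s as [|x s IH]; simpl; [ring|]; rewrite IH; ring. Qed.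

Lemma sumR_nonneg {T} (s : list T) (f : T -> R) :
  (forall x, 0 <= f x) -> 0 <= sumR s f.
Proof.
  intro H; unfold sumR; induction s as [|x s IH]; simpl; [lra|].
  specialize (H x); lra.
Qed.

Lemma ind_true {T} (P : pset T) t : P t -> ind P t = 1.
Proof. intro H; unfold ind; destruct (excluded_middle_informative (P t)); tauto. Qed.

Lemma ind_false {T} (P : pset T) t : ~ P t -> ind P t = 0.
Proof. intro H; unfold ind; destruct (excluded_middle_informative (P t)); tauto. Qed.

Lemma ind_nonneg {T} (P : pset T) t : 0 <= ind P t.
Proof. unfold ind; destruct (excluded_middle_informative (P t)); lra. Qed.

Lemma ind_setU {T} (B C : pset T) t :
  disjoint B C -> ind (setU B C) t = ind B t + ind C t.
Proof.
  intro D; unfold ind, setU; repeat destruct excluded_middle_informative;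
    try ring; exfalso; firstorder.
Qed.

Lemma ind_rect {T} (B1 B2 : pset T) x y : ind (rect B1 B2) (x, y) = ind B1 x * ind B2 y.
Proof.
  unfold ind, rect; simpl; repeat destruct excluded_middle_informative;
    try ring; exfalso; tauto.
Qed.

Lemma sumR_ind_preimage {T} (s : list T) (p : T -> T) (w : T -> R) (B : pset T) :
  (forall x, w x = 0 \/ p x = x) ->
  sumR s (fun x => ind (preimage p B) x * w x) = sumR s (fun x => ind B x * w x).
Proof.
  intro H; apply sumR_ext; intro x.
  destruct (H x) as [-> | E]; [ring|].
  change (ind B (p x) * w x = ind B x * w x); now rewrite E.
Qed.

Lemma is_algebra_powerset {X} : is_algebra (fun _ : pset X => True).
Proof. repeat split. Qed.

Lemma prod_alg_rect {X} (A : pset (pset X)) B1 B2 :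
  A B1 -> A B2 -> prod_alg A (rect B1 B2).
Proof. intros H1 H2 C _ HC; exact (HC B1 B2 H1 H2). Qed.

Lemma prod_alg_setU {X} (A : pset (pset X)) S1 S2 :
  prod_alg A S1 -> prod_alg A S2 -> prod_alg A (setU S1 S2).
Proof. intros H1 H2 C HC Hr; apply HC; [exact (H1 C HC Hr) | exact (H2 C HC Hr)]. Qed.

Lemma G3_eq_union_rects :
  G3 = setU (setU (rect (eq r0) (eq r0)) (rect (eq r1) (eq r1))) (rect (eq ii) (eq ii)).
Proof.
  apply functional_extensionality; intros [a b]; apply propositional_extensionality.
  unfold G3, setU, rect; simpl; destruct a, b; intuition congruence.
Qed.

Lemma G3_measurable : prod_alg PowX3 G3.
Proof.
  rewrite G3_eq_union_rects.
  repeat apply prod_alg_setU; apply prod_alg_rect; exact I.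
Qed.

Lemma G3_sym x y : G3 (x, y) -> G3 (y, x).
Proof. unfold G3; simpl; congruence. Qed.

Lemma G3_comp : seteq (rel_comp G3 G3) G3.
Proof.
  intros [a b]; unfold rel_comp, G3; simpl; split.
  - intros [y [-> ->]]; reflexivity.
  - intros ->; exists b; auto.
Qed.

Lemma Pi3_in_R3 x : R3 (Pi3 x).
Proof. destruct x; unfold R3; simpl; auto. Qed.

Lemma Pi3_idempotent x : Pi3 (Pi3 x) = Pi3 x.
Proof. destruct x; reflexivity. Qed.

Lemma Pi3_id_on_R3 x : R3 x -> Pi3 x = x.
Proof. intros [-> | ->]; reflexivity. Qed.

Lemma R3_I3_disjoint : disjoint R3 I3.
Proof. unfold disjoint, R3, I3; intros x [-> | ->]; discriminate. Qed.

Lemma mu3_sumR eta B : mu3 eta B = sumR all3 (fun x => ind B x * m3 eta x).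
Proof. reflexivity. Qed.

Lemma mu3x2_sumR eta S :
  mu3x2 eta S = sumR all3 (fun x => sumR all3 (fun y => ind S (x, y) * (m3 eta x * m3 eta y))).
Proof. reflexivity. Qed.

Lemma m3_zero_or_Pi3_fixed eta x : m3 eta x = 0 \/ Pi3 x = x.
Proof. destruct x; auto. Qed.

Section Example.

Variable eta : R.
Hypothesis Heta : 0 <= eta < 1.

Lemma m3_nonneg x : 0 <= m3 eta x.
Proof. destruct x; simpl; [| | lra]; apply Rlt_le, Rdiv_lt_0_compat; lra. Qed.

Lemma m3_sq_balance x :
  m3 eta x * m3 eta x = m3 eta x + eta * (m3 eta x * m3 eta x).
Proof. destruct x; simpl; [field; lra | field; lra | ring]. Qed.

Lemma mu3_fin_additive : fin_additive_nonneg PowX3 (mu3 eta).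
Proof.
  split.
  - intros B _; apply sumR_nonneg; intro x.
    apply Rmult_le_pos; [apply ind_nonneg | apply m3_nonneg].
  - intros B C _ _ D; rewrite !mu3_sumR.
    rewrite <- sumR_plus; apply sumR_ext; intro x; rewrite ind_setU by exact D; ring.
Qed.

Lemma mu3x2_fin_additive : fin_additive_nonneg (prod_alg PowX3) (mu3x2 eta).
Proof.
  split.
  - intros S _; apply sumR_nonneg; intro x; apply sumR_nonneg; intro y.
    apply Rmult_le_pos; [apply ind_nonneg | apply Rmult_le_pos; apply m3_nonneg].
  - intros S1 S2 _ _ D; rewrite !mu3x2_sumR.
    rewrite <- sumR_plus; apply sumR_ext; intro x.
    rewrite <- sumR_plus; apply sumR_ext; intro y.
    rewrite ind_setU by exact D; ring.
Qed.

Lemma mu3x2_rect B1 B2 : mu3x2 eta (rect B1 B2) = mu3 eta B1 * mu3 eta B2.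
Proof.
  rewrite !mu3x2_sumR.
  rewrite (sumR_ext _ _ (fun x => mu3 eta B2 * (ind B1 x * m3 eta x))).
  - rewrite sumR_scal_l; apply Rmult_comm.
  - intro x; rewrite Rmult_comm, mu3_sumR, <- sumR_scal_l.
    apply sumR_ext; intro y; rewrite ind_rect; ring.
Qed.

Lemma mu3_R3_I3 : mu3 eta R3 + mu3 eta I3 = 2 / (1 - eta).
Proof.
  unfold mu3; simpl.
  rewrite (ind_true R3 r0), (ind_true R3 r1), (ind_false R3 ii),
          (ind_false I3 r0), (ind_false I3 r1), (ind_true I3 ii);
    unfold R3, I3; try (intuition discriminate).
  field; lra.
Qed.

Lemma mu3_preimage_Pi3 B : mu3 eta (preimage Pi3 B) = mu3 eta B.
Proof. apply sumR_ind_preimage, m3_zero_or_Pi3_fixed. Qed.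

Lemma mu3x2_diag B :
  mu3x2 eta (setI (rect B setT) G3) = sumR all3 (fun x => ind B x * (m3 eta x * m3 eta x)).
Proof.
  rewrite mu3x2_sumR; apply sumR_ext; intro x.
  destruct (excluded_middle_informative (B x)) as [Bx|Bx];
    unfold sumR; destruct x; simpl;
    repeat rewrite ?ind_true, ?ind_false
      by (unfold setI, rect, setT, G3; simpl; intuition discriminate);
    ring.
Qed.

Lemma mu3x2_diag_balance B :
  mu3x2 eta (setI (rect B setT) G3) =
  mu3 eta B + eta * mu3x2 eta (setI (rect (preimage Pi3 B) setT) G3).
Proof.
  rewrite !mu3x2_diag, sumR_ind_preimage by
    (intro x; destruct (m3_zero_or_Pi3_fixed eta x) as [-> | ->]; [left; ring | right; reflexivity]).
  rewrite <- sumR_scal_l; rewrite !mu3_sumR; rewrite <- sumR_plus.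
  apply sumR_ext; intro x; rewrite m3_sq_balance at 1; ring.
Qed.

End Example.

Theorem theorem5p2 (eta : R) (Heta : 0 <= eta < 1) (Heta0 : eta <> 0) :
  admissible X3 PowX3 (mu3 eta) (mu3x2 eta) R3 I3 Pi3 G3 (2 / (1 - eta)) eta.
Proof.
  split; [exact (inhabits r0)|].
  split; [exact is_algebra_powerset|].
  split; [exact (mu3_fin_additive eta Heta)|].
  split; [exact (mu3x2_fin_additive eta Heta)|].
  split; [exact (fun B1 B2 _ _ => mu3x2_rect eta B1 B2)|].
  split; [exact I|].
  split; [exact I|].
  split; [exact R3_I3_disjoint|].
  split; [exact Pi3_in_R3|].
  split; [exact G3_measurable|].
  split; [apply Rdiv_lt_0_compat; lra|].
  split; [split; lra|].
  split; [exact Pi3_idempotent|].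
  split; [exact Pi3_id_on_R3|].
  split; [exact (fun _ _ _ => I)|].
  split; [exact (fun x => eq_refl)|].
  split; [exact G3_sym|].
  split; [exact G3_comp|].
  split; [exact (mu3_R3_I3 eta Heta)|].
  split; [exact (fun B _ _ => mu3_preimage_Pi3 eta B)|].
  exact (fun B _ => mu3x2_diag_balance eta Heta B).
Qed.
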